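(* Let $k=\mathbb{F}_q$ with $q$ a power of $2$. Let $S$ be the set of monic irreducible polynomials of degree $7$ in $k[x]$ of the form $x^7+ax^3+bx+c$ with $a,b,c\in k$, let $S_0\subseteq S$ be those dividing $x^{q^3}+x^q+x$, and $S_1\subseteq S$ those dividing $x^{q^3}+x^{q^2}+x$. Then $$(x^{q^3}+x^q+x)(x^{q^3}+x^{q^2}+x)=x^2\prod_{f\in S}f(x),$$ and $|S_0|=|S_1|=(q^3-1)/7$. *)

From HB Require Import structures.
From mathcomp Require Import all_boot all_order all_algebra all_field.
From mathcomp Require Import boolp.
Set Implicit Arguments. Unset Strict Implicit. Unset Printing Implicit Defensive.
Import GRing.Theory.
Local Open Scope ring_scope.

Definition trinom7 (F : nzRingType) (a b c : F) : {poly F} :=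
  'X^7 + a%:P * 'X^3 + b%:P * 'X + c%:P.

Definition L0 (F : nzRingType) (q : nat) : {poly F} := 'X^(q ^ 3) + 'X^q + 'X.
Definition L1 (F : nzRingType) (q : nat) : {poly F} := 'X^(q ^ 3) + 'X^(q ^ 2) + 'X.

From HB Require Import structures.
From mathcomp Require Import all_boot all_order all_algebra all_field.
From mathcomp Require Import boolp ring zify.
Set Implicit Arguments. Unset Strict Implicit. Unset Printing Implicit Defensive.
Import GRing.Theory.
Local Open Scope ring_scope.

(* Let phi : y |-> y^q be the Frobenius of an algebraic closure of F and
   L_j = X^(q^3) + X^(q^j) + X for j = 1, 2, so that L0 = L_1 and L1 = L_2.  As q is
   even, L_j' = 1: L_j = X M_j is separable, and its nonzero roots are the r with
   phi^3 r = phi^j r + r.  This relation forces phi^7 r = r, hence (7 being prime)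
   r has exact period 7 and its orbit is the set of nonzero F_2-combinations of
   r, phi r, phi^2 r.  The irreducible factor of M_j at r is the product over that
   orbit, and X times it is the vanishing polynomial of an F_2-space of dimension 3,
   which is linearized, i.e. of the form X^8 + a X^4 + b X^2 + c X: so every
   irreducible factor of M_j is a trinomial x^7 + a x^3 + b x + c.  Conversely, if
   such a trinomial f is irreducible, X f is linearized, so its roots are the
   F_2-span of r, phi r, phi^2 r for a root r of f, which has period 7; writing
   phi^3 r in this span and excluding the combinations of smaller period leaves
   exactly the two relations above, so f divides exactly one of L0, L1.  The
   counts follow by comparing degrees. *)

Section Iterates.
Variables (T : Type) (f : T -> T).

Lemma iter_mul_fix x d m : iter d f x = x -> iter (d * m) f x = x.
Proof. by move=> fx; elim: m => [|m IHm]; rewrite ?muln0 // mulnS iterD IHm. Qed.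

Lemma iter_prime_fix x p d :
  prime p -> (0 < d < p)%N -> iter p f x = x -> iter d f x = x -> f x = x.
Proof.
move=> p_pr /andP[d_gt0 lt_dp] px dx.
have [a _ dvd_p] := Bezoutl d (prime_gt0 p_pr).
have /eqnP co_pd : coprime p d by rewrite prime_coprime // gtnNdvd.
rewrite co_pd in dvd_p.
have : iter (1 + a * d) f x = x by rewrite -(divnK dvd_p) mulnC iter_mul_fix.
by rewrite iterD mulnC iter_mul_fix.
Qed.

Lemma map_traject x n : map f (traject f x n) = traject f (f x) n.
Proof. by elim: n x => //= n IHn x; rewrite IHn. Qed.

Lemma iter_inj n : injective f -> injective (iter n f).
Proof. by move=> f_inj; elim: n => //= n IHn x y /f_inj /IHn. Qed.

End Iterates.

Section EqIterates.
Variables (T : eqType) (f : T -> T).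

Lemma perm_traject_period x n :
  iter n f x = x -> perm_eq (map f (traject f x n)) (traject f x n).
Proof.
move=> nx; have := trajectSr f x n; rewrite nx trajectS map_traject.
by move/(congr1 (perm_eq^~ (x :: traject f x n))); rewrite perm_rcons perm_cons => ->.
Qed.

Lemma uniq_traject x n : injective f ->
  (forall d, (0 < d < n)%N -> iter d f x != x) -> uniq (traject f x n).
Proof.
move=> f_inj no_period; case: n no_period => // n no_period.
rewrite looping_uniq; apply/trajectP => -[i lt_in].
rewrite -(subnKC (ltnW lt_in)) iterD.
move/(iter_inj f_inj)/eqP; apply/negP/no_period.
by rewrite subn_gt0 lt_in /= ltnS leq_subr.
Qed.

End EqIterates.

Section Factorization.
Variable F : fieldType.
Implicit Types p u v g : {poly F}.

Lemma eqp_irreducible u v : u %= v -> irreducible_poly u -> irreducible_poly v.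
Proof.
move=> euv [su irr_u]; split=> [|w sw dw]; first by rewrite -(eqp_size euv).
have wu : w %| u by rewrite (eqp_dvdr _ euv).
exact: eqp_trans (irr_u w sw wu) euv.
Qed.

Lemma ex_irreducible_dvdp p :
  (1 < size p)%N -> exists2 u, irreducible_poly u & u %| p.
Proof.
move: {2}(size p) (leqnn (size p)) => n; elim: n p => [|n IHn] p le_pn sp.
  by have := leq_trans sp le_pn.
have [irr_p | red_p] := pselect (irreducible_poly p); first by exists p.
have : ~ (forall w : {poly F}, size w != 1%N -> w %| p -> w %= p).
  by move=> irr_p; apply: red_p.
case/existsNP => w /not_implyP[sw /not_implyP[wp Nwp]].
have p0 : p != 0 by rewrite -size_poly_gt0 ltnW.
have w0 : w != 0 by apply: contraNneq p0 => w0; rewrite -dvd0p -w0.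
have sw1 : (1 < size w)%N by rewrite ltn_neqAle eq_sym sw size_poly_gt0.
have lt_wp : (size w < size p)%N.
  by rewrite ltn_neqAle dvdp_leq // (dvdp_size_eqp wp) andbT; apply/negP.
have [u irr_u uw] := IHn w (leq_trans lt_wp le_pn) sw1.
by exists u => //; apply: dvdp_trans wp.
Qed.

Lemma ex_monic_irreducible_dvdp p :
  (1 < size p)%N -> exists u, [/\ u \is monic, irreducible_poly u & u %| p].
Proof.
case/ex_irreducible_dvdp => u irr_u up.
have lc_u : lead_coef u != 0 by rewrite lead_coef_eq0 irredp_neq0.
have eu : (lead_coef u)^-1 *: u %= u by rewrite eqp_scale // invr_eq0.
exists ((lead_coef u)^-1 *: u); split.
- by apply/monicP; rewrite lead_coefZ mulVf.
- by apply: eqp_irreducible irr_u; rewrite eqp_sym.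
- by rewrite (eqp_dvdl _ eu).
Qed.

Lemma coprimep_monic_irreducible u v : u \is monic -> v \is monic ->
  irreducible_poly u -> irreducible_poly v -> u != v -> coprimep u v.
Proof.
move=> mu mv irr_u [_ irr_v] neq_uv; rewrite irreducible_poly_coprime //.
apply: contra neq_uv => uv; rewrite -eqp_monic //.
by apply: irr_v uv; rewrite gtn_eqF //; case: irr_u.
Qed.

Lemma dvdp_prod_irreducible (I : eqType) (s : seq I) (G : I -> {poly F}) g :
  uniq s -> injective G ->
  {in s, forall i, [/\ G i \is monic, irreducible_poly (G i) & G i %| g]} ->
  \prod_(i <- s) G i %| g.
Proof.
elim: s => [|i s IHs] /=; first by rewrite big_nil dvd1p.
case/andP=> i_notin_s s_uniq G_inj Gs; rewrite big_cons.
have Gs' : {in s, forall j, [/\ G j \is monic, irreducible_poly (G j) & G j %| g]}.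
  by move=> j js; apply: Gs; rewrite inE js orbT.
have [mi irr_i ig] := Gs i (mem_head i s).
rewrite Gauss_dvdp ?ig ?IHs // big_seq.
apply: (big_ind (coprimep (G i))) => [|v w|j js].
- exact: coprimep1.
- by rewrite coprimepMr => -> ->.
have [mj irr_j _] := Gs' j js; apply: coprimep_monic_irreducible => //.
by apply: contraNneq i_notin_s => /G_inj ->.
Qed.

Lemma monic_separable_prod_irreducible (I : finType) (P : pred I)
    (G : I -> {poly F}) g :
  g \is monic -> separable_poly g -> injective G ->
  (forall i, P i -> [/\ G i \is monic, irreducible_poly (G i) & G i %| g]) ->
  (forall u, u \is monic -> irreducible_poly u -> u %| g -> exists2 i, P i & u = G i) ->
  g = \prod_(i | P i) G i.
Proof.
move=> mg sg G_inj PG gG; set Pr := \prod_(i | P i) G i.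
have Pr_g : Pr %| g.
  rewrite /Pr -big_filter dvdp_prod_irreducible ?filter_uniq ?index_enum_uniq //.
  by move=> i; rewrite mem_filter => /andP[/PG].
have mPr : Pr \is monic by apply: monic_prod => i /PG[].
have Eg := divpK Pr_g; set Q := g %/ Pr in Eg *.
have mQ : Q \is monic by rewrite -(monicMr _ mPr) Eg.
have [sQ | /ex_monic_irreducible_dvdp[u [mu irr_u uQ]]] := leqP (size Q) 1.
  suff /eqP Q1 : Q == 1 by rewrite -Eg Q1 mul1r.
  rewrite -eqp_monic ?monic1 // -size_poly_eq1 eqn_leq sQ size_poly_gt0.
  exact: monic_neq0.
have ug : u %| g by rewrite -Eg dvdp_mulr.
have [i Pi Eu] := gG u mu irr_u ug.
have GiPr : G i %| Pr by rewrite /Pr (bigD1 i) //= dvdp_mulr.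
have : G i ^+ 2 %| g by rewrite -Eg expr2 dvdp_mul // -Eu.
by rewrite separable_nosquare // -Eu gtn_eqF //; case: irr_u.
Qed.

End Factorization.

Lemma dvdp_of_common_root (F K : fieldType) (iota : {rmorphism F -> K})
    (f g : {poly F}) r :
  irreducible_poly f -> root (map_poly iota f) r -> root (map_poly iota g) r ->
  f %| g.
Proof.
move=> irr_f rf; apply: contraLR.
rewrite -(irreducible_poly_coprime _ irr_f) -(coprimep_map iota).
by move/coprimep_root/(_ rf).
Qed.

Section Frobenius.
Variables (F : finFieldType) (K : fieldType) (iota : {rmorphism F -> K}).

Lemma pnat_card_pchar : [pchar K].-nat #|F|.
Proof.
have [p p_pr pF] := finPcharP F.
rewrite (eq_pnat _ (pcharf_eq (rmorph_pchar iota pF))) (card_pprimeChar pF).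
by rewrite pnatX pnat_id.
Qed.

(* The embedding [iota] is unused in the body: it only witnesses that [K] has the
   characteristic of [F], which makes [frob iota] a ring morphism. *)
Definition frob of {rmorphism F -> K} := fun y : K => y ^+ #|F|.
Local Notation phi := (frob iota).

Lemma frob_is_nmod_morphism : nmod_morphism phi.
Proof.
split=> [|x y]; rewrite /frob; last exact: exprDn_pchar pnat_card_pchar.
by rewrite expr0n eqn0Ngt (ltn_trans _ (finNzRing_gt1 F)).
Qed.

Lemma frob_is_monoid_morphism : monoid_morphism phi.
Proof. by split=> [|x y]; rewrite /frob ?expr1n ?exprMn. Qed.

HB.instance Definition _ := GRing.isNmodMorphism.Build K K phi frob_is_nmod_morphism.
HB.instance Definition _ :=
  GRing.isMonoidMorphism.Build K K phi frob_is_monoid_morphism.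

Lemma frob_inj : injective phi.
Proof. exact: fmorph_inj. Qed.

Lemma iter_frobE n y : iter n phi y = y ^+ (#|F| ^ n).
Proof. by elim: n => [|n IHn] /=; rewrite ?expr1 // IHn /frob -exprM expnSr. Qed.

Lemma frob_iota a : phi (iota a) = iota a.
Proof. by rewrite /frob -rmorphXn expf_card. Qed.

(* Fixed points of [phi] are roots of [X^q - X], which is [\prod_(a : F) (X - a)]. *)
Lemma frob_fixed y : phi y = y -> exists a, y = iota a.
Proof.
move=> fy; have : (map_poly iota ('X^#|F| - 'X)).[y] = 0.
  by rewrite rmorphB /= map_polyXn map_polyX !hornerE -/(phi y) fy subrr.
rewrite finField_genPoly rmorph_prod horner_prod => /eqP; rewrite prodf_seq_eq0.
case/hasP => a _ /=; rewrite map_polyXsubC hornerXsubC subr_eq0 => /eqP ->.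
by exists a.
Qed.

Lemma map_frob_fixed (h : {poly K}) :
  map_poly phi h = h -> exists h0, h = map_poly iota h0.
Proof.
move=> fh; exists (\poly_(i < size h) odflt 0 [pick a | iota a == h`_i]).
apply/polyP => i; rewrite coef_map coef_poly; case: ltnP => [lt_ih | ge_ih].
  case: pickP => [a /eqP // | no_a]; have /frob_fixed[a ha] : phi h`_i = h`_i.
    by rewrite -coef_map fh.
  by move: (no_a a); rewrite ha eqxx.
by rewrite nth_default // raddf0.
Qed.

Lemma root_iter_frob p y n :
  root (map_poly iota p) y -> root (map_poly iota p) (iter n phi y).
Proof.
have frob_p : map_poly phi (map_poly iota p) = map_poly iota p.
  by apply/polyP => i; rewrite !coef_map /= frob_iota.
move=> py; elim: n => //= n /eqP IHn.
by rewrite /root -frob_p horner_map /= IHn rmorph0.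
Qed.

(* An irreducible polynomial is the product of [X - y] over any orbit of
   [phi] on its roots: the product is [phi]-invariant, hence defined over [F]. *)
Lemma orbit_poly p r n :
  p \is monic -> irreducible_poly p -> root (map_poly iota p) r ->
  (0 < n)%N -> iter n phi r = r -> uniq (traject phi r n) ->
  map_poly iota p = \prod_(y <- traject phi r n) ('X - y%:P).
Proof.
move=> mp irr_p pr n_gt0 nr r_uniq.
set h := \prod_(y <- traject phi r n) ('X - y%:P).
have [h0 Eh] : exists h0, h = map_poly iota h0.
  apply: map_frob_fixed; rewrite rmorph_prod /=.
  under eq_bigr do rewrite map_polyXsubC.
  by rewrite -(big_map phi xpredT (fun y => 'X - y%:P)) (perm_big _ (perm_traject_period nr)).
have h0p : h0 %| p.
  rewrite -(dvdp_map iota) -Eh.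
  have r_roots : all (root (map_poly iota p)) (traject phi r n).
    by apply/allP => y /trajectP[i _ ->]; apply: root_iter_frob.
  have r_uroots : uniq_roots (traject phi r n) by rewrite uniq_rootsE.
  have [p' ->] := uniq_roots_prod_XsubC r_roots r_uroots.
  exact: dvdp_mull.
have mh0 : h0 \is monic by rewrite -(map_monic iota) -Eh monic_prod_XsubC.
have sh0 : size h0 != 1%N.
  by rewrite -(size_map_poly iota) -Eh size_prod_XsubC size_traject eqSS -lt0n.
have /eqP <- // : h0 == p by rewrite -eqp_monic //; apply: irr_p.2.
Qed.

Lemma size_le_period p r d :
  p \is monic -> irreducible_poly p -> root (map_poly iota p) r ->
  (0 < d)%N -> iter d phi r = r -> (size p <= d.+1)%N.
Proof.
move=> mp irr_p pr d_gt0 dr.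
have ex_e : exists e, (0 < e)%N && (iter e phi r == r) by exists d; rewrite d_gt0 dr eqxx.
case: (ex_minnP ex_e) => e /andP[e_gt0 /eqP er] e_min.
have r_uniq : uniq (traject phi r e).
  apply: uniq_traject frob_inj _ => k /andP[k_gt0 lt_ke]; apply/eqP => kr.
  by have := e_min k; rewrite k_gt0 kr eqxx leqNgt lt_ke => /(_ isT).
rewrite -(size_map_poly iota) (orbit_poly mp irr_p pr e_gt0 er r_uniq).
by rewrite size_prod_XsubC size_traject ltnS e_min // d_gt0 dr eqxx.
Qed.

End Frobenius.

Section Char2.
Variables (R : comNzRingType) (R2 : (2 \in [pchar R])%N).

Lemma exprD_pchar2 n (x y : R) : (x + y) ^+ (2 ^ n) = x ^+ (2 ^ n) + y ^+ (2 ^ n).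
Proof. by apply: exprDn_pchar; rewrite (eq_pnat _ (pcharf_eq R2)) pnatX pnat_id. Qed.

Lemma sqrrD_pchar2 (x y : R) : (x + y) ^+ 2 = x ^+ 2 + y ^+ 2.
Proof. exact: (exprD_pchar2 1 x y). Qed.

Lemma addr_eq0_pchar2 (x y : R) : (x + y == 0) = (x == y).
Proof. by rewrite addr_eq0 oppr_pchar2. Qed.

Lemma morph_linearized (A B C : R) :
  {morph (fun y => y ^+ 8 + A * y ^+ 4 + B * y ^+ 2 + C * y) : x y / x + y}.
Proof.
move=> x y /=.
have e8 : (x + y) ^+ 8 = x ^+ 8 + y ^+ 8 := exprD_pchar2 3 x y.
have e4 : (x + y) ^+ 4 = x ^+ 4 + y ^+ 4 := exprD_pchar2 2 x y.
by rewrite e8 e4 sqrrD_pchar2; ring.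
Qed.

Lemma morph_sqr_add (f : R -> R) k :
  {morph f : x y / x + y} -> {morph (fun y => f y ^+ 2 + k * f y) : x y / x + y}.
Proof. by move=> fD x y /=; rewrite fD sqrrD_pchar2; ring. Qed.

Lemma mul_morph_shift (f : R -> R) v y :
  {morph f : x y / x + y} -> f y * f (y + v) = f y ^+ 2 + f v * f y.
Proof. by move=> fD; rewrite fD; ring. Qed.

(* The vanishing polynomial of the F_2-span of [a, b, c] is linearized:
   [P_(W + <v>) y = P_W y * P_W (y + v) = P_W y ^+ 2 + P_W v * P_W y]
   for additive [P_W], starting from [P_0 y = y]. *)
Lemma prod_span3 (S : comNzRingType) (s : {rmorphism S -> R}) (a b c : S) :
  exists A B C : S, forall y,
    y * (y + s a) * (y + s b) * (y + s (a + b)) * (y + s c) * (y + s (a + c))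
      * (y + s (b + c)) * (y + s (a + b + c))
    = y ^+ 8 + s A * y ^+ 4 + s B * y ^+ 2 + s C * y.
Proof.
pose P1 y := y ^+ 2 + s a * y.
pose beta := b ^+ 2 + a * b.
pose P2 y := P1 y ^+ 2 + s beta * P1 y.
pose gam := (c ^+ 2 + a * c) ^+ 2 + beta * (c ^+ 2 + a * c).
pose P3 y := P2 y ^+ 2 + s gam * P2 y.
have P1D : {morph P1 : x y / x + y} by apply: morph_sqr_add.
have P2D : {morph P2 : x y / x + y} by apply: morph_sqr_add.
have P1b : P1 (s b) = s beta by rewrite /P1 /beta !(rmorphD, rmorphM, rmorphXn).
have P2c : P2 (s c) = s gam by rewrite /P2 /P1 /gam !(rmorphD, rmorphM, rmorphXn).
have P2E z : P2 z = P1 z * P1 (z + s b) by rewrite mul_morph_shift // P1b.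
have P3E z : P3 z = P2 z * P2 (z + s c) by rewrite mul_morph_shift // P2c.
pose al := a ^+ 2 + beta; pose al' := a * beta.
have two0 : 2%:R = 0 :> R := pcharf0 R2.
have P2y z : P2 z = z ^+ 4 + s al * z ^+ 2 + s al' * z.
  rewrite /P2 /P1 /al /al' !(rmorphD, rmorphM, rmorphXn).
  by move: (s a) (s beta) => sa sbeta; ring: two0.
exists (al ^+ 2 + gam), (al' ^+ 2 + gam * al), (gam * al') => y.
transitivity (P3 y).
  by rewrite P3E !P2E /P1 !rmorphD; move: (s a) (s b) (s c) => sa sb sc; ring.
rewrite /P3 !P2y; clearbody al al' gam; rewrite !(rmorphD, rmorphM, rmorphXn).
by move: (s al) (s al') (s gam) => sal sal' sgam; ring: two0.
Qed.

Definition bcomb (a b c : R) (v : bool * bool * bool) : R :=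
  a *+ v.1.1 + b *+ v.1.2 + c *+ v.2.

Lemma mulrb_addb (x : R) (b1 b2 : bool) : x *+ b1 + x *+ b2 = x *+ (b1 (+) b2).
Proof. by case: b1 b2 => [] [] /=; rewrite ?addr0 ?add0r ?addrr_pchar2. Qed.

Lemma bcombD a b c u v :
  bcomb a b c u + bcomb a b c v
  = bcomb a b c (u.1.1 (+) v.1.1, u.1.2 (+) v.1.2, u.2 (+) v.2).
Proof. by rewrite /bcomb addrACA [X in X + _]addrACA !mulrb_addb. Qed.

Lemma bcomb_inj a b c :
  (forall v, bcomb a b c v = 0 -> v = (false, false, false)) -> injective (bcomb a b c).
Proof.
move=> ker u v e; move: (ker (u.1.1 (+) v.1.1, u.1.2 (+) v.1.2, u.2 (+) v.2)).
rewrite -bcombD e addrr_pchar2 // => /(_ erefl).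
by case: u v {e} => [[[] []] []] [[[] []] []].
Qed.

Lemma morph_bcomb (f : R -> R) a b c v :
  {morph f : x y / x + y} -> f 0 = 0 -> f (bcomb a b c v) = bcomb (f a) (f b) (f c) v.
Proof.
move=> fD f0; rewrite /bcomb !fD.
by case: v => [[[] []] []]; rewrite /= ?f0.
Qed.

End Char2.

Lemma roots_bcomb (K : idomainType) (g : {poly K}) a b c y :
  g != 0 -> (size g <= 9)%N -> injective (bcomb a b c) ->
  (forall v, root g (bcomb a b c v)) -> root g y -> exists v, y = bcomb a b c v.
Proof.
move=> g0 size_g comb_inj g_comb gy.
set span := [seq bcomb a b c v | v <- enum {: bool * bool * bool}].
suff /mapP[v _ ->] : y \in span by exists v.
apply: contraT => y_notin; have := max_poly_roots g0 (rs := y :: span).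
have span_roots : all (root g) span by apply/allP => _ /mapP[v _ ->].
rewrite /= gy y_notin span_roots map_inj_uniq ?enum_uniq //.
by rewrite size_map -cardE !card_prod !card_bool ltnNge size_g => /(_ isT isT).
Qed.

Section Recurrence.
Variables (K : fieldType) (K2 : (2 \in [pchar K])%N) (phi : {rmorphism K -> K}).
Variable r : K.

Lemma iter_rmorphD n (y z : K) : iter n phi (y + z) = iter n phi y + iter n phi z.
Proof. by elim: n => //= n ->; rewrite rmorphD. Qed.

Lemma iter_rec_shift j : iter 3 phi r = iter j phi r + r ->
  forall i, iter i.+3 phi r = iter (i + j) phi r + iter i phi r.
Proof. by move=> e3 i; rewrite -addn3 iterD e3 iter_rmorphD -iterD. Qed.

Lemma traject_rec1 : iter 3 phi r = iter 1 phi r + r ->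
  iter 7 phi r = r /\
  traject phi r 7 = [:: r; iter 1 phi r; iter 2 phi r; r + iter 1 phi r;
    iter 1 phi r + iter 2 phi r; r + iter 1 phi r + iter 2 phi r; r + iter 2 phi r].
Proof.
move=> e3; have two0 := pcharf0 K2.
have rec i : iter i.+3 phi r = iter i.+1 phi r + iter i phi r.
  by rewrite (iter_rec_shift e3) addn1.
have e3' : iter 3 phi r = r + iter 1 phi r by rewrite e3 addrC.
have e4 : iter 4 phi r = iter 1 phi r + iter 2 phi r by rewrite rec addrC.
have e5 : iter 5 phi r = r + iter 1 phi r + iter 2 phi r by rewrite rec e3; ring.
have e6 : iter 6 phi r = r + iter 2 phi r by rewrite rec e4 e3; ring: two0.
have e7 : iter 7 phi r = r by rewrite rec e5 e4; ring: two0.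
split=> //; rewrite -[traject _ _ _]/[:: r; iter 1 phi r; iter 2 phi r; iter 3 phi r;
  iter 4 phi r; iter 5 phi r; iter 6 phi r].
by rewrite e3' e4 e5 e6.
Qed.

Lemma traject_rec2 : iter 3 phi r = iter 2 phi r + r ->
  iter 7 phi r = r /\
  traject phi r 7 = [:: r; iter 1 phi r; iter 2 phi r; r + iter 2 phi r;
    r + iter 1 phi r + iter 2 phi r; r + iter 1 phi r; iter 1 phi r + iter 2 phi r].
Proof.
move=> e3; have two0 := pcharf0 K2.
have rec i : iter i.+3 phi r = iter i.+2 phi r + iter i phi r.
  by rewrite (iter_rec_shift e3) addn2.
have e3' : iter 3 phi r = r + iter 2 phi r by rewrite e3 addrC.
have e4 : iter 4 phi r = r + iter 1 phi r + iter 2 phi r by rewrite rec e3; ring.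
have e5 : iter 5 phi r = r + iter 1 phi r by rewrite rec e4; ring: two0.
have e6 : iter 6 phi r = iter 1 phi r + iter 2 phi r by rewrite rec e5 e3; ring: two0.
have e7 : iter 7 phi r = r by rewrite rec e6 e4; ring: two0.
split=> //; rewrite -[traject _ _ _]/[:: r; iter 1 phi r; iter 2 phi r; iter 3 phi r;
  iter 4 phi r; iter 5 phi r; iter 6 phi r].
by rewrite e3' e4 e5 e6.
Qed.

(* The period of [r] divides the prime 7, and period 1 would give [r = r + r]. *)
Lemma no_small_period_rec j : r != 0 -> iter 7 phi r = r ->
  iter 3 phi r = iter j phi r + r -> forall d, (0 < d < 7)%N -> iter d phi r != r.
Proof.
move=> r0 e7 e3 d d_range; apply/eqP => dr.
have fr := iter_prime_fix (isT : prime 7) d_range e7 dr.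
by move: e3; rewrite !(iter_fix _ fr) (addrr_pchar2 K2) => /eqP; rewrite (negPf r0).
Qed.

Lemma bcomb_orbit_inj : r != 0 -> (forall d, (0 < d < 4)%N -> iter d phi r != r) ->
  injective (bcomb r (iter 1 phi r) (iter 2 phi r)).
Proof.
move=> r0 no_period; have two0 := pcharf0 K2.
move: (no_period 1 isT) (no_period 2 isT) (no_period 3 isT) => /= p1 p2 p3.
apply: (bcomb_inj K2) => -[[[] []] []]; rewrite /bcomb /= ?mulr1n ?mulr0n ?addr0 ?add0r //.
- move=> e; case/eqP: p3; have := congr1 phi e; rewrite !rmorphD rmorph0 => e'.
  have : r + phi (phi (phi r)) = 0 by rewrite -[RHS](addr0 0) -{1}e -e'; ring: two0.
  by move/eqP; rewrite (addr_eq0_pchar2 K2) eq_sym => /eqP.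
- by move/eqP; rewrite (addr_eq0_pchar2 K2) eq_sym (negPf p1).
- by move/eqP; rewrite (addr_eq0_pchar2 K2) eq_sym (negPf p2).
- by move/eqP; rewrite (negPf r0).
- by rewrite -rmorphD => /eqP; rewrite fmorph_eq0 (addr_eq0_pchar2 K2) eq_sym (negPf p1).
- by move/eqP; rewrite fmorph_eq0 (negPf r0).
- by move/eqP; rewrite !fmorph_eq0 (negPf r0).
Qed.

Lemma iter3_bcomb_rec v : (forall d, (0 < d < 7)%N -> iter d phi r != r) ->
  iter 3 phi r = bcomb r (iter 1 phi r) (iter 2 phi r) v ->
  exists2 j, (j == 1%N) || (j == 2%N) & iter 3 phi r = iter j phi r + r.
Proof.
move=> no_period; have two0 := pcharf0 K2.
move: (no_period 1 isT) (no_period 2 isT) (no_period 3 isT) (no_period 4 isT).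
move=> /= p1 p2 p3 p4.
case: v => [[[] []] []]; rewrite /bcomb /= ?mulr1n ?mulr0n ?addr0 ?add0r => e3.
- by case/eqP: p4; rewrite e3 !rmorphD e3; ring: two0.
- by exists 1%N => //=; rewrite e3 addrC.
- by exists 2%N => //=; rewrite e3 addrC.
- by case/eqP: p3.
- by case/eqP: p3; apply: (fmorph_inj phi); rewrite e3 rmorphD e3; ring: two0.
- by case/eqP: p2; apply: (fmorph_inj phi).
- by case/eqP: p1; do 2!apply: (fmorph_inj phi).
- by move/eqP: e3; rewrite !fmorph_eq0 => /eqP r0; case/eqP: p1; rewrite r0 rmorph0.
Qed.

End Recurrence.

Section Trinomial.
Variable F : fieldType.
Implicit Types a b c : F.

Lemma size_trinom7_low a b c : (size (a%:P * 'X^3 + b%:P * 'X + c%:P)%R < 8)%N.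
Proof.
rewrite !mul_polyC; apply: leq_ltn_trans (size_polyD _ _) _.
rewrite gtn_max (leq_ltn_trans (size_polyC_leq1 _)) // andbT.
apply: leq_ltn_trans (size_polyD _ _) _; rewrite gtn_max.
by rewrite !(leq_ltn_trans (size_scale_leq _ _)) ?size_polyXn ?size_polyX.
Qed.

Lemma trinom7E a b c : trinom7 a b c = 'X^7 + (a%:P * 'X^3 + b%:P * 'X + c%:P).
Proof. by rewrite /trinom7 !addrA. Qed.

Lemma size_trinom7 a b c : size (trinom7 a b c) = 8%N.
Proof. by rewrite trinom7E size_polyDl size_polyXn // size_trinom7_low. Qed.

Lemma monic_trinom7 a b c : trinom7 a b c \is monic.
Proof.
apply/monicP; rewrite trinom7E lead_coefDl ?lead_coefXn //.
by rewrite size_polyXn size_trinom7_low.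
Qed.

Lemma coef_trinom7 a b c :
  [/\ (trinom7 a b c)`_3 = a, (trinom7 a b c)`_1 = b & (trinom7 a b c)`_0 = c].
Proof.
rewrite /trinom7 !(coefD, coefCM, coefXn, coefX, coefC) /=.
by split; rewrite ?(mulr0, mulr1, addr0, add0r).
Qed.

Lemma trinom7_inj : injective (fun t : F * F * F => trinom7 t.1.1 t.1.2 t.2).
Proof.
move=> [[a b] c] [[a' b'] c'] /= e.
by move: (coef_trinom7 a b c) (coef_trinom7 a' b' c'); rewrite e => -[<- <- <-] [-> -> ->].
Qed.

Lemma horner_trinom7X a b c y :
  (trinom7 a b c * 'X).[y] = y ^+ 8 + a * y ^+ 4 + b * y ^+ 2 + c * y.
Proof.
by rewrite hornerMX /trinom7 !(hornerD, hornerCM, hornerXn, hornerX, hornerC); ring.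
Qed.

End Trinomial.

Lemma map_trinom7 (F K : fieldType) (iota : {rmorphism F -> K}) (a b c : F) :
  map_poly iota (trinom7 a b c) = trinom7 (iota a) (iota b) (iota c).
Proof.
by rewrite /trinom7 !rmorphD /= !map_polyXn !rmorphM /= map_polyX !map_polyC.
Qed.

Lemma trinom7_of_map (F K : fieldType) (iota : {rmorphism F -> K}) p (A B C : K) :
  map_poly iota p = trinom7 A B C -> exists a b c, p = trinom7 a b c.
Proof.
move=> Ep; exists p`_3, p`_1, p`_0; apply: (map_poly_inj iota).
have [eA eB eC] := coef_trinom7 A B C.
by rewrite map_trinom7 -!coef_map Ep eA eB eC.
Qed.

Lemma prod_span3_trinom7 (K : fieldType) (K2 : (2 \in [pchar K])%N) (a b c : K) :
  exists A B C, \prod_(y <- [:: a; b; a + b; c; a + c; b + c; a + b + c]) ('X - y%:P)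
                = trinom7 A B C.
Proof.
have P2 : (2 \in [pchar {poly K}])%N by rewrite pchar_poly.
have [A [B [C E]]] := prod_span3 P2 polyC a b c.
exists A, B, C; apply: (mulIf (negbT (polyX_eq0 _))).
rewrite !big_cons big_nil mulr1 !(oppr_pchar2 P2).
apply: etrans (etrans _ (E 'X)) _; first by ring.
by rewrite /trinom7; ring.
Qed.

Section LinearizedPolynomials.
Variables (F : finFieldType) (F2 : (2 \in [pchar F])%N).

(* [Lpoly 1] and [Lpoly 2] are [L0 F #|F|] and [L1 F #|F|]. *)
Definition Lpoly (j : nat) : {poly F} := 'X^(#|F| ^ 3) + 'X^(#|F| ^ j) + 'X.
Definition Mpoly (j : nat) : {poly F} := 'X^((#|F| ^ 3).-1) + 'X^((#|F| ^ j).-1) + 1.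

Lemma Lpoly_Mpoly j : Lpoly j = Mpoly j * 'X.
Proof.
have q_gt0 := ltnW (finNzRing_gt1 F).
by rewrite /Lpoly /Mpoly !mulrDl mul1r -!exprSr !prednK ?expn_gt0 ?q_gt0.
Qed.

Lemma card_exp_gt1 n : (0 < n)%N -> (1 < #|F| ^ n)%N.
Proof. by move=> n_gt0; rewrite -[1%N](expn0 #|F|) ltn_exp2l // finNzRing_gt1. Qed.

Lemma mulrn_card_exp (p : {poly F}) n : (0 < n)%N -> p *+ (#|F| ^ n) = 0.
Proof.
move=> n_gt0; rewrite -mulr_natr -polyC_natr.
suff /eqP -> : (#|F| ^ n)%:R == 0 :> F by rewrite mulr0.
rewrite -(dvdn_pcharf F2); apply: dvdn_exp => //.
have := finNzRing_gt1 F; rewrite (card_pprimeChar F2).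
by case: logn => // k _; rewrite expnS dvdn_mulr.
Qed.

(* In characteristic 2 the derivative of [Lpoly j] is [1]. *)
Lemma separable_Lpoly j : (0 < j)%N -> separable_poly (Lpoly j).
Proof.
move=> j_gt0; rewrite unlock /Lpoly !derivD !derivXn derivX.
by rewrite !mulrn_card_exp // !add0r coprimep1.
Qed.

Lemma separable_Mpoly j : (0 < j)%N -> separable_poly (Mpoly j).
Proof. by move/separable_Lpoly; rewrite Lpoly_Mpoly separable_mul => /and3P[]. Qed.

Lemma size_Mpoly_low j : (0 < j < 3)%N ->
  (size ('X^((#|F| ^ j).-1) + 1 : {poly F})%R < size ('X^((#|F| ^ 3).-1) : {poly F}))%N.
Proof.
case/andP=> j_gt0 j_lt3; have qj_gt1 := card_exp_gt1 j_gt0.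
have qj_lt : (#|F| ^ j < #|F| ^ 3)%N by rewrite ltn_exp2l // finNzRing_gt1.
by rewrite -polyC1 size_XnaddC ?size_polyXn; lia.
Qed.

Lemma monic_Mpoly j : (0 < j < 3)%N -> Mpoly j \is monic.
Proof.
move=> j_range; apply/monicP.
by rewrite /Mpoly -addrA lead_coefDl ?lead_coefXn ?size_Mpoly_low.
Qed.

Lemma size_Mpoly j : (0 < j < 3)%N -> size (Mpoly j) = (#|F| ^ 3)%N.
Proof.
move=> j_range; rewrite /Mpoly -addrA size_polyDl ?size_Mpoly_low //.
by rewrite size_polyXn prednK // expn_gt0 (ltnW (finNzRing_gt1 F)).
Qed.

Variables (K : fieldType) (iota : {rmorphism F -> K}).
Local Notation phi := (frob iota).

Lemma root_Lpoly j r :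
  root (map_poly iota (Lpoly j)) r = (iter 3 phi r == iter j phi r + r).
Proof.
rewrite /root /Lpoly !rmorphD /= !map_polyXn map_polyX.
rewrite !(hornerD, hornerXn, hornerX) -!(@iter_frobE _ _ iota) -addrA.
by rewrite (addr_eq0_pchar2 (rmorph_pchar iota F2)).
Qed.

Lemma root_Mpoly0 j : (0 < j)%N -> ~~ root (map_poly iota (Mpoly j)) 0.
Proof.
move=> j_gt0; have pred_eq0 m : (1 < m)%N -> (m.-1 == 0)%N = false by case: m => [|[]].
rewrite /root /Mpoly !rmorphD /= !map_polyXn rmorph1 !(hornerD, hornerXn, hornerC).
by rewrite !expr0n !pred_eq0 ?add0r ?oner_eq0 ?card_exp_gt1.
Qed.

End LinearizedPolynomials.

Section TrinomialRoots.
Variables (F : finFieldType) (F2 : (2 \in [pchar F])%N).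
Variables (K : fieldType) (iota : {rmorphism F -> K}).
Local Notation phi := (frob iota).
Let K2 : (2 \in [pchar K])%N := rmorph_pchar iota F2.

Lemma trinom7_no_small_period a b c r :
  irreducible_poly (trinom7 a b c) -> root (map_poly iota (trinom7 a b c)) r ->
  forall d, (0 < d < 7)%N -> iter d phi r != r.
Proof.
move=> irr rt d /andP[d_gt0 d_lt7]; apply/eqP => dr.
have := size_le_period (monic_trinom7 a b c) irr rt d_gt0 dr.
by rewrite size_trinom7 ltnS leqNgt d_lt7.
Qed.

(* [X * trinom7 a b c] is linearized, so its roots form an F_2-space containing
   [r, phi r, phi^2 r]; these are independent and span all 8 roots, so [phi^3 r]
   is a combination of them, and only two combinations have period 7. *)
Lemma trinom7_root_rec a b c r :
  irreducible_poly (trinom7 a b c) -> root (map_poly iota (trinom7 a b c)) r ->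
  exists2 j, (j == 1%N) || (j == 2%N) & iter 3 phi r = iter j phi r + r.
Proof.
move=> irr rt; have no_period := trinom7_no_small_period irr rt.
have r0 : r != 0 by apply: contraNneq (no_period 1%N isT) => ->; rewrite /= rmorph0.
set g := map_poly iota (trinom7 a b c) * 'X.
have gE y : g.[y] = y ^+ 8 + iota a * y ^+ 4 + iota b * y ^+ 2 + iota c * y.
  by rewrite /g map_trinom7 horner_trinom7X.
have gD : {morph horner g : x y / x + y}.
  by move=> x y; rewrite !gE; apply: (morph_linearized K2).
have g_iter n : g.[iter n phi r] = 0.
  by rewrite /g hornerMX (eqP (root_iter_frob n rt)) mul0r.
have comb_inj : injective (bcomb r (iter 1 phi r) (iter 2 phi r)).
  apply: (bcomb_orbit_inj K2) => // d /andP[d_gt0 d_lt4].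
  by rewrite no_period // d_gt0 (ltn_trans d_lt4).
have g_comb v : root g (bcomb r (iter 1 phi r) (iter 2 phi r) v).
  have [g0 gr] : g.[0] = 0 /\ g.[r] = 0 by rewrite hornerMX mulr0 (g_iter 0%N).
  by rewrite /root (morph_bcomb _ _ _ _ gD g0) gr !g_iter /bcomb !mul0rn !addr0.
have [v e3] : exists v, iter 3 phi r = bcomb r (iter 1 phi r) (iter 2 phi r) v.
  apply: roots_bcomb comb_inj g_comb _; last by rewrite /root g_iter.
    by rewrite mulf_neq0 ?polyX_eq0 // map_poly_eq0 monic_neq0 ?monic_trinom7.
  by rewrite size_mulX ?map_poly_eq0 ?monic_neq0 ?monic_trinom7 // size_map_poly size_trinom7.
exact: (iter3_bcomb_rec K2 no_period e3).
Qed.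

Lemma trinom7_of_rec u r j :
  u \is monic -> irreducible_poly u -> root (map_poly iota u) r -> r != 0 ->
  (j == 1%N) || (j == 2%N) -> iter 3 phi r = iter j phi r + r ->
  exists a b c, u = trinom7 a b c.
Proof.
move=> mu irr_u ru r0 j12 e3.
have [e7 orbitE] : iter 7 phi r = r /\
    \prod_(y <- traject phi r 7) ('X - y%:P)
    = \prod_(y <- [:: r; iter 1 phi r; r + iter 1 phi r; iter 2 phi r; r + iter 2 phi r;
                   iter 1 phi r + iter 2 phi r; r + iter 1 phi r + iter 2 phi r])
        ('X - y%:P).
  case/orP: j12 e3 => /eqP -> e3.
    by have [e7 ->] := traject_rec1 K2 e3; split; rewrite // !big_cons big_nil; ring.
  by have [e7 ->] := traject_rec2 K2 e3; split; rewrite // !big_cons big_nil; ring.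
have r_uniq := uniq_traject (@frob_inj _ _ iota) (no_small_period_rec K2 r0 e7 e3).
have [A [B [C E]]] := prod_span3_trinom7 K2 r (iter 1 phi r) (iter 2 phi r).
have : map_poly iota u = trinom7 A B C.
  by rewrite (orbit_poly mu irr_u ru _ e7 r_uniq) // orbitE E.
exact: trinom7_of_map.
Qed.

End TrinomialRoots.

Section TrinomialFactors.
Variables (F : finFieldType) (F2 : (2 \in [pchar F])%N).
Local Notation trinom t := (trinom7 t.1.1 t.1.2 t.2).

Lemma dvdp_Mpoly_trinom7 j u : (0 < j < 3)%N ->
  u \is monic -> irreducible_poly u -> u %| Mpoly F j -> exists a b c, u = trinom7 a b c.
Proof.
move=> j_range mu irr_u uM; have [K [iota _]] := countable_algebraic_closure F.
have [r ru] : exists r, root (map_poly iota u) r.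
  by apply/closed_rootP; rewrite size_map_poly gtn_eqF //; case: irr_u.
have rM : root (map_poly iota (Mpoly F j)) r by apply: root_dvdp ru; rewrite dvdp_map.
have j_gt0 : (0 < j)%N by case/andP: j_range.
have r0 : r != 0 by apply: contraNneq (@root_Mpoly0 _ _ iota j j_gt0) => <-.
have : root (map_poly iota (Lpoly F j)) r by rewrite Lpoly_Mpoly rmorphM rootM rM.
rewrite (root_Lpoly F2) => /eqP e3; apply: (trinom7_of_rec F2 mu irr_u ru r0 _ e3).
by case/andP: j_range; case: j {e3 rM uM j_gt0} => [|[|[|]]].
Qed.

Lemma dvdp_Lpoly2_trinom7 a b c : irreducible_poly (trinom7 a b c) ->
  (trinom7 a b c %| Lpoly F 2) = ~~ (trinom7 a b c %| Lpoly F 1).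
Proof.
move=> irr; have [K [iota _]] := countable_algebraic_closure F.
have [r rt] : exists r, root (map_poly iota (trinom7 a b c)) r.
  by apply/closed_rootP; rewrite size_map_poly size_trinom7.
have rel k : trinom7 a b c %| Lpoly F k -> iter 3 (frob iota) r = iter k (frob iota) r + r.
  by move=> dk; apply/eqP; rewrite -(root_Lpoly F2); apply: root_dvdp rt; rewrite dvdp_map.
have not_both : trinom7 a b c %| Lpoly F 1 -> ~~ (trinom7 a b c %| Lpoly F 2).
  move=> /rel e1; apply/negP => /rel e2.
  have e12 : iter 1 (frob iota) r = iter 2 (frob iota) r by apply: (addIr r); rewrite -e1 -e2.
  case/eqP: (trinom7_no_small_period irr rt (isT : (0 < 1 < 7)%N)).
  by apply: (@frob_inj _ _ iota); exact: esym e12.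
have [j j12 e3] := trinom7_root_rec F2 irr rt.
have dj : trinom7 a b c %| Lpoly F j.
  by apply: (dvdp_of_common_root irr rt); rewrite (root_Lpoly F2) e3.
case/orP: j12 dj => /eqP -> dj; first by rewrite dj (negPf (not_both dj)).
by rewrite dj; apply/esym/negP => /not_both; rewrite dj.
Qed.

Lemma Mpoly_prod j : (0 < j < 3)%N ->
  Mpoly F j =
  \prod_(t | `[< irreducible_poly (trinom t) >] && (trinom t %| Lpoly F j)) trinom t.
Proof.
move=> j_range; apply: monic_separable_prod_irreducible.
- exact: monic_Mpoly.
- by apply: (separable_Mpoly F2); case/andP: j_range.
- exact: trinom7_inj.
- move=> t /andP[/asboolP irr_t]; rewrite Lpoly_Mpoly Gauss_dvdpl.
    by split; rewrite ?monic_trinom7.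
  rewrite irreducible_poly_coprime //; apply/negP.
  by move/(dvdp_leq (negbT (polyX_eq0 _))); rewrite size_trinom7 size_polyX.
move=> u mu irr_u uM; have [a [b [c Eu]]] := dvdp_Mpoly_trinom7 j_range mu irr_u uM.
exists (a, b, c) => //=; rewrite -Eu Lpoly_Mpoly dvdp_mulr // andbT.
exact/asboolP.
Qed.

Lemma card_trinom7_dvdp j : (0 < j < 3)%N ->
  #|[set t : F * F * F | `[< irreducible_poly (trinom t) >] && (trinom t %| Lpoly F j)]|
  = ((#|F| ^ 3 - 1) %/ 7)%N.
Proof.
move=> j_range; have := size_Mpoly F2 j_range.
rewrite (Mpoly_prod j_range) size_prod => [|t _]; last by rewrite monic_neq0 ?monic_trinom7.
under eq_bigr do rewrite size_trinom7.
rewrite sum_nat_const cardsE; set n := #|_| => size_n.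
have -> : (#|F| ^ 3 - 1 = 7 * n)%N by rewrite -size_n; lia.
by rewrite mulKn.
Qed.

Lemma prod_irreducible_trinom7 :
  \prod_(t | `[< irreducible_poly (trinom t) >]) trinom t = Mpoly F 1 * Mpoly F 2.
Proof.
rewrite (bigID (fun t => trinom t %| Lpoly F 1)) /= -(Mpoly_prod (isT : 0 < 1 < 3)%N).
rewrite (Mpoly_prod (isT : 0 < 2 < 3)%N); congr (_ * _); apply: eq_bigl => t.
by case: asboolP => //= irr_t; rewrite dvdp_Lpoly2_trinom7.
Qed.

End TrinomialFactors.

Theorem lemma1p10 (F : finFieldType) (H2 : (2%N \in [pchar F])) :
  let q := #|F| in
  L0 F q * L1 F q =
    'X^2 * \prod_(t : F * F * F | `[< irreducible_poly (trinom7 t.1.1 t.1.2 t.2) >])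
             trinom7 t.1.1 t.1.2 t.2
  /\ #|[set t : F * F * F | `[< irreducible_poly (trinom7 t.1.1 t.1.2 t.2) >]
                            && (trinom7 t.1.1 t.1.2 t.2 %| L0 F q)]|
     = ((q ^ 3 - 1) %/ 7)%N
  /\ #|[set t : F * F * F | `[< irreducible_poly (trinom7 t.1.1 t.1.2 t.2) >]
                            && (trinom7 t.1.1 t.1.2 t.2 %| L1 F q)]|
     = ((q ^ 3 - 1) %/ 7)%N.
Proof.
move=> q; have L0E : L0 F q = Lpoly F 1 by rewrite /Lpoly expn1.
have L1E : L1 F q = Lpoly F 2 by [].
rewrite L0E L1E !card_trinom7_dvdp // prod_irreducible_trinom7 // !Lpoly_Mpoly.
by split=> //; ring.
Qed.
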